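(* Let $\alpha$ be a sequence such that $M(\alpha)$ is a bounded multiplicative Hankel operator on $\ell^2(\mathbb{N})$, and for $0<r<1$ let $\alpha_r=D_r\alpha$. Then $M(\alpha)$ is compact if and only if $\lim_{r\to1}\|M(\alpha_r)-M(\alpha)\|_{\mathcal{B}(\ell^2(\mathbb{N}))}=0$.
   Context: For a sequence $\alpha\colon\mathbb{N}\to\mathbb{C}$, $M(\alpha)$ is defined by $\langle M(\alpha)a,b\rangle_{\ell^2(\mathbb{N})}=\sum_{n,m}a(n)\overline{b(m)}\alpha(nm)$ for finitely supported $a,b$, and is bounded if it extends to a bounded operator on $\ell^2(\mathbb{N})$. Let $p_1<p_2<\dots$ be the primes. For a sequence $a$ and $0<r<1$, $D_ra(n)=r^{\sum_{j\ge1}j\kappa_j}a(n)$ where $n=\prod_{j\ge1}p_j^{\kappa_j}$. *)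

From mathcomp Require Import all_boot.
From Stdlib Require Import Reals.
From Coquelicot Require Import Coquelicot.

Set Implicit Arguments.
Unset Strict Implicit.

(* Sequences indexed by N = {1,2,...}; a sequence is a function nat -> C whose
   value at 0 is ignored. *)

(* index j of a prime p in the list p_1 = 2 < p_2 = 3 < ... :
   j = number of primes <= p. *)
Definition prime_index (p : nat) : nat := seq.count prime (seq.iota 0 p.+1).

Definition Dweight (n : nat) : nat :=
  \sum_(p <- primes n) (prime_index p * logn p n)%N.

Definition Dr (r : R) (a : nat -> C) : nat -> C :=
  fun n => Cmult (RtoC (pow r (Dweight n))) (a n).

(* Finitely supported sequences are represented by a bound N and a function a,
   only the values a 1, ..., a N being used (support in {1,...,N}). *)

Definition sqnorm (N : nat) (a : nat -> C) : R :=
  sum_n_m (fun n => Rsqr (Cmod (a n))) 1%nat N.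

Definition Mform (alpha : nat -> C) (N : nat) (a b : nat -> C) : C :=
  sum_n_m (fun n => sum_n_m (fun m =>
     Cmult (Cmult (a n) (Cconj (b m))) (alpha (n * m)%nat)) 1%nat N) 1%nat N.

Definition Mbounded (alpha : nat -> C) : Prop :=
  exists K : R, forall (N : nat) (a b : nat -> C),
    Cmod (Mform alpha N a b) <= K * sqrt (sqnorm N a) * sqrt (sqnorm N b).

(* ||M(alpha) - M(beta)||_{B(l^2)} <= eps, via the forms on the dense subspace
   of finitely supported sequences. *)
Definition Mdiff_norm_le (alpha beta : nat -> C) (eps : R) : Prop :=
  forall (N : nat) (a b : nat -> C),
    Cmod (Cminus (Mform alpha N a b) (Mform beta N a b))
      <= eps * sqrt (sqnorm N a) * sqrt (sqnorm N b).

Definition Mapply (alpha : nat -> C) (N : nat) (a : nat -> C) (m : nat) : C :=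
  sum_n_m (fun n => Cmult (alpha (n * m)%nat) (a n)) 1%nat N.

(* M(alpha) is compact: the image of the unit ball is relatively compact in
   l^2, i.e. (l^2 being complete) totally bounded: for every eps > 0 it is
   covered by finitely many eps-balls with centres y 0, ..., y (K-1) in l^2.
   The unit ball is replaced by its dense subset of finitely supported vectors
   (same closure of the image by continuity), and the l^2 distance is
   ||Ma - y_i||^2 = sup over L of the partial sums over {1..L}. *)
Definition Mcompact (alpha : nat -> C) : Prop :=
  forall eps : R, (0 < eps)%R ->
    exists (K : nat) (y : nat -> nat -> C),
      forall (N : nat) (a : nat -> C), (sqnorm N a <= 1)%R ->
        exists i : nat, (i < K)%nat /\
          forall L : nat,
            sum_n_m (fun m => Rsqr (Cmod (Cminus (Mapply alpha N a m) (y i m)))) 1%nat L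
              <= Rsqr eps.

(* The weight w(n) = sum_j j kappa_j is additive, so D_r multiplies alpha(nm) by r^w(n) r^w(m):
   as forms, M(alpha_r) = D_r M(alpha) D_r and
   M(alpha_r) - M(alpha) = (D_r - 1) M(alpha) D_r + M(alpha) (D_r - 1),
   and since the form of M(alpha) is symmetric the second term is again (D_r - 1) M(alpha),
   tested against conj b.
   If M(alpha) is compact, its image of the unit ball is totally bounded, hence has uniformly
   small tails in l^2; the multiplier r^w(m) - 1 is bounded by 1 and tends to 0 uniformly on
   each finite set of indices, so (D_r - 1) M(alpha) tends to 0 in norm.
   Conversely, only finitely many n have weight at most k (a prime of large index has large
   weight), so D_r, which is at most r^k beyond them, is a norm limit of finite-rank truncations;
   hence every M(alpha_r) is compact, and so is their norm limit M(alpha). *)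

From Stdlib Require Import Reals Lra Lia Classical.
From Coquelicot Require Import Coquelicot.
From mathcomp Require Import all_boot zify.

Section PrimeWeight.
Local Open Scope nat_scope.

Lemma Dweight_sum_range (n B : nat) : n < B ->
  Dweight n = \sum_(0 <= p < B) prime_index p * logn p n.
Proof.
move=> ltnB; rewrite /Dweight [RHS](bigID (mem (primes n))) /=.
rewrite [X in _ + X]big1 ?addn0; last first.
  by move=> p; rewrite -logn_gt0 lt0n negbK => /eqP ->; rewrite muln0.
rewrite -[RHS]big_filter; apply: perm_big; apply: uniq_perm.
- exact: primes_uniq.
- by rewrite filter_uniq // iota_uniq.
move=> p; rewrite mem_filter mem_index_iota; case pn: (p \in primes n) => //=.
by move: pn; rewrite mem_primes => /and3P[_ n0 /dvdn_leq]; lia.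
Qed.

Lemma DweightM (m n : nat) : 0 < m -> 0 < n ->
  Dweight (m * n) = Dweight m + Dweight n.
Proof.
move=> m0 n0; have Bm : m < (m * n).+1 by rewrite ltnS leq_pmulr.
have Bn : n < (m * n).+1 by rewrite ltnS leq_pmull.
rewrite !(@Dweight_sum_range _ (m * n).+1) // -big_split.
by apply: eq_bigr => p _; rewrite lognM // mulnDr.
Qed.

Lemma prime_index_lt (q p : nat) : q < p -> prime p -> prime_index q < prime_index p.
Proof.
move=> qp pp; rewrite /prime_index.
have -> : p.+1 = q.+1 + (p - q) by lia.
rewrite iotaD count_cat -[X in X < _]addn0 ltn_add2l -has_count.
by apply/hasP; exists p; rewrite // mem_iota; lia.
Qed.

Lemma prime_index_gt0 (p : nat) : prime p -> 0 < prime_index p.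
Proof. by move=> pp; have := prime_index_lt _ _ (prime_gt0 pp) pp; lia. Qed.

Lemma prime_index_le_bounded (k : nat) :
  exists P, forall p, prime p -> prime_index p <= k -> p <= P.
Proof.
elim: k => [|k [P HP]].
  by exists 0 => p /prime_index_gt0; lia.
have [q Pq qp] := prime_above P; exists q => p pp idx_p.
rewrite leqNgt; apply/negP => /(prime_index_lt _ _)/(_ pp) lt_qp.
have : prime_index q > k by rewrite ltnNge; apply/negP => /(HP q qp); lia.
lia.
Qed.

Lemma Dweight_le_bounded (k : nat) :
  exists B, forall n, 0 < n -> Dweight n <= k -> n <= B.
Proof.
have [P HP] := prime_index_le_bounded k; exists (P.+1 ^ k) => n n0 wn.
rewrite {1}(prod_prime_decomp n0) prime_decompE big_map /=.
apply: (@leq_trans (P.+1 ^ Dweight n)); last exact: leq_pexp2l (ltn0Sn P) wn.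
rewrite /Dweight expn_sum !big_seq; apply: leq_prod => p pn; rewrite expnM.
have pp : prime p by move: pn; rewrite mem_primes => /andP[].
have e_gt0 : 0 < logn p n by rewrite logn_gt0.
have idx_le : prime_index p <= Dweight n.
  rewrite /Dweight (bigD1_seq p pn (primes_uniq n)) /=.
  by apply: leq_trans (leq_addr _ _); rewrite leq_pmulr.
rewrite leq_exp2r //; apply: leq_trans (HP p pp (leq_trans idx_le wn)) _.
apply: leq_trans (leqnSn P) _.
by rewrite -{1}(expn1 P.+1) leq_pexp2l // prime_index_gt0.
Qed.

End PrimeWeight.

Local Open Scope R_scope.

Section RealBounds.

Lemma le_sqr_of_le_mul_sqrt (S A K : R) : 0 <= S -> 0 <= A -> 0 <= K ->
  S <= K * sqrt A * sqrt S -> S <= K * K * A.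
Proof.
move=> S0 A0 K0; rewrite -{1 3}(sqrt_sqrt S) // -{2}(sqrt_sqrt A) //.
have := sqrt_pos S; have := sqrt_pos A; move: (sqrt S) (sqrt A) => s t s0 t0 le_st.
have [->|spos] := Req_dec s 0; first by nra.
have : s <= K * t by apply: (Rmult_le_reg_r s); lra.
by nra.
Qed.

Lemma sqrt_le_mul_sqrt (X Y e : R) : 0 <= e -> 0 <= Y -> X <= Rsqr e * Y -> sqrt X <= e * sqrt Y.
Proof.
move=> e0 Y0 XY; apply: Rle_trans (sqrt_le_1_alt _ _ XY) _.
by rewrite sqrt_mult ?sqrt_Rsqr; [apply: Rle_refl | exact: e0 | exact: Rle_0_sqr | exact: Y0].
Qed.

Lemma pow_unit_interval (r : R) (k : nat) : 0 <= r <= 1 -> 0 <= r ^ k <= 1.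
Proof. by move=> r01; split; [apply: pow_le | rewrite -(pow1 k); apply: pow_incr]; lra. Qed.

Lemma one_sub_pow_le (r : R) (k : nat) : 0 <= r <= 1 -> 1 - r ^ k <= INR k * (1 - r).
Proof.
move=> r01; elim: k => [|k IH]; first by rewrite /=; lra.
rewrite S_INR /=; have [pk0 pk1] := pow_unit_interval r k r01.
have : 0 <= (1 - r ^ k) * (1 - r) by apply: Rmult_le_pos; lra.
lra.
Qed.

Lemma Rsqr_Cmod_le_sub (u v : C) :
  Rsqr (Cmod u) <= 2 * Rsqr (Cmod (u - v)) + 2 * Rsqr (Cmod v).
Proof.
have tri : Cmod u <= Cmod (u - v) + Cmod v.
  by apply: Rle_trans (Cmod_triangle _ _); apply: Req_le; f_equal; ring.
move: tri (Cmod_ge_0 u) (Cmod_ge_0 (u - v)) (Cmod_ge_0 v).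
move: (Cmod u) (Cmod (u - v)) (Cmod v) => p q w pqw p0 q0 w0.
have : p * p <= (q + w) * (q + w) by apply: Rmult_le_compat.
have := Rle_0_sqr (q - w); rewrite /Rsqr; lra.
Qed.

End RealBounds.

Section FiniteSums.

Lemma sum_n_m_morph {G H : AbelianMonoid} (phi : G -> H) :
  phi zero = zero -> (forall x y, phi (plus x y) = plus (phi x) (phi y)) ->
  forall (f : nat -> G) (n m : nat),
  phi (sum_n_m f n m) = sum_n_m (fun k => phi (f k)) n m.
Proof.
move=> phi0 phiD f n; elim=> [|m IH].
  by case: n => [|n]; rewrite ?sum_n_n // !sum_n_m_zero //; lia.
case: (Nat.le_gt_cases n m.+1) => nm; last by rewrite !sum_n_m_zero.
by rewrite !sum_n_Sm // phiD IH.
Qed.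

Lemma sum_n_m_1_Sr {G : AbelianMonoid} (f : nat -> G) (N : nat) :
  sum_n_m f 1 N.+1 = plus (sum_n_m f 1 N) (f N.+1).
Proof. by apply: sum_n_Sm; lia. Qed.

Lemma sum_n_m_le_loc (f g : nat -> R) (n m : nat) :
  (forall k, (n <= k <= m)%nat -> f k <= g k) ->
  sum_n_m f n m <= sum_n_m g n m.
Proof.
elim: m => [|m IH] fg.
  case: n fg => [|n] fg; first by rewrite !sum_n_n; apply: fg; lia.
  by rewrite !sum_n_m_zero //; [apply: Rle_refl|lia|lia].
case: (Nat.le_gt_cases n m.+1) => nm; last by rewrite !sum_n_m_zero //; apply: Rle_refl.
rewrite !sum_n_Sm //; apply: Rplus_le_compat; [apply: IH => k hk|]; apply: fg; lia.
Qed.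

Lemma sum_n_m_nonneg (f : nat -> R) (n m : nat) :
  (forall k, 0 <= f k) -> 0 <= sum_n_m f n m.
Proof.
move=> f0; have := @sum_n_m_le_loc (fun _ => 0) f n m (fun k _ => f0 k).
by rewrite sum_n_m_const Rmult_0_r.
Qed.

Lemma sum_n_m_plusR (f g : nat -> R) (n m : nat) :
  sum_n_m (fun k => f k + g k) n m = sum_n_m f n m + sum_n_m g n m.
Proof. exact: (sum_n_m_plus (G := R_AbelianMonoid)). Qed.

Lemma sum_n_m_scalR (c : R) (f : nat -> R) (n m : nat) :
  sum_n_m (fun k => c * f k) n m = c * sum_n_m f n m.
Proof. exact: (sum_n_m_mult_l (K := R_Ring)). Qed.

Lemma sum_n_m_split1 {G : AbelianMonoid} (f : nat -> G) (L N : nat) : (L <= N)%nat ->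
  sum_n_m f 1 N = plus (sum_n_m f 1 L) (sum_n_m f L.+1 N).
Proof. by move=> LN; apply: sum_n_m_Chasles; lia. Qed.

Lemma sum_n_m_le_upper (f : nat -> R) (L N : nat) :
  (forall k, 0 <= f k) -> (L <= N)%nat -> sum_n_m f 1 L <= sum_n_m f 1 N.
Proof.
move=> f0 LN; rewrite (sum_n_m_split1 f _ _ LN).
by have := sum_n_m_nonneg f L.+1 N f0; rewrite /plus /=; lra.
Qed.

Lemma sum_n_m_zero_ext {G : AbelianMonoid} (f : nat -> G) (N N' : nat) :
  (N <= N')%nat -> (forall k, (N < k <= N')%nat -> f k = zero) ->
  sum_n_m f 1 N' = sum_n_m f 1 N.
Proof.
move=> NN' f0; rewrite (sum_n_m_split1 f _ _ NN') (sum_n_m_ext_loc f (fun _ => zero) N.+1 N').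
  by rewrite sum_n_m_const_zero plus_zero_r.
by move=> k hk; apply: f0; lia.
Qed.

Lemma sum_n_m_tail_le (f : nat -> R) (L0 L : nat) :
  (forall k, 0 <= f k) -> sum_n_m f L0.+1 L <= sum_n_m f 1 L.
Proof.
move=> f0; case: (leqP L0 L) => L0L; last by rewrite sum_n_m_zero; [exact: sum_n_m_nonneg | lia].
by rewrite (sum_n_m_split1 f _ _ L0L) /plus /=; have := sum_n_m_nonneg f 1 L0 f0; lra.
Qed.

Lemma sum_n_m_tail_small (f : nat -> R) (M : R) :
  (forall k, 0 <= f k) -> (forall L, sum_n_m f 1 L <= M) ->
  forall eps, 0 < eps -> exists L0, forall L1 L, (L0 <= L1)%nat -> sum_n_m f L1.+1 L <= eps.
Proof.
move=> f0 fM eps eps0; set E := fun x => exists L, x = sum_n_m f 1 L.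
have E_bound : bound E by exists M => x [L ->].
have E_inhabited : exists x, E x by exists (sum_n_m f 1 0), 0%nat.
have [s [s_ub s_lub]] := completeness E E_bound E_inhabited.
have [L0 HL0] : exists L0, s - eps < sum_n_m f 1 L0.
  apply: NNPP => small; have : s <= s - eps; last by lra.
  apply: s_lub => x [L ->]; apply: Rnot_lt_le => lt; apply: small; exists L; lra.
exists L0 => L1 L L01; case: (leqP L1 L) => L1L; last by rewrite sum_n_m_zero /zero /=; [lra | lia].
have := s_ub _ (ex_intro _ L erefl); rewrite (sum_n_m_split1 f _ _ L1L) /plus /=.
have : sum_n_m f 1 L0 <= sum_n_m f 1 L1 by apply: sum_n_m_le_upper.
lra.
Qed.

Lemma sum_n_m_swap {G : AbelianMonoid} (f : nat -> nat -> G) (a b c d : nat) :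
  sum_n_m (fun n => sum_n_m (fun m => f n m) c d) a b =
  sum_n_m (fun m => sum_n_m (fun n => f n m) a b) c d.
Proof.
elim: b => [|b IH].
  case: a => [|a]; first by rewrite sum_n_n; apply: sum_n_m_ext => m; rewrite sum_n_n.
  rewrite sum_n_m_zero; last lia.
  by rewrite (sum_n_m_ext _ (fun _ => zero)) ?sum_n_m_const_zero // => m; rewrite sum_n_m_zero //; lia.
case: (Nat.le_gt_cases a b.+1) => ab.
  by rewrite sum_n_Sm // IH -sum_n_m_plus; apply: sum_n_m_ext => m; rewrite sum_n_Sm.
rewrite sum_n_m_zero // (sum_n_m_ext _ (fun _ => zero)) ?sum_n_m_const_zero // => m.
by rewrite sum_n_m_zero.
Qed.

Lemma sum_n_m_Cauchy_Schwarz (a b : nat -> R) (N : nat) :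
  Rsqr (sum_n_m (fun k => a k * b k) 1 N) <=
  sum_n_m (fun k => Rsqr (a k)) 1 N * sum_n_m (fun k => Rsqr (b k)) 1 N.
Proof.
rewrite /Rsqr; elim: N => [|N IH].
  by rewrite !sum_n_m_zero /zero /=; [lra|lia..].
rewrite !sum_n_m_1_Sr /plus /=.
move: IH; set S := sum_n_m _ 1 N; set A := sum_n_m _ 1 N; set B := sum_n_m _ 1 N.
move: (a N.+1) (b N.+1) => x y SAB.
have A0 : 0 <= A by apply: sum_n_m_nonneg => k; apply: Rle_0_sqr.
have B0 : 0 <= B by apply: sum_n_m_nonneg => k; apply: Rle_0_sqr.
(* AM-GM [2 S x y <= A y^2 + x^2 B], obtained by squaring both sides *)
have cross : 2 * S * x * y <= A * (y * y) + x * x * B.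
  set X := A * (y * y) + x * x * B; have X0 : 0 <= X by rewrite /X; nra.
  suff : (2 * S * x * y) * (2 * S * x * y) <= X * X by nra.
  have : S * S * ((x * y) * (x * y)) <= A * B * ((x * y) * (x * y)).
    by apply: Rmult_le_compat_r; nra.
  have := Rle_0_sqr (A * (y * y) - x * x * B); rewrite /X /Rsqr; nra.
lra.
Qed.

Lemma sum_n_m_ext_locC (f g : nat -> C) (n m : nat) :
  (forall k, (n <= k <= m)%nat -> f k = g k) -> sum_n_m f n m = sum_n_m g n m.
Proof. by move=> fg; apply: sum_n_m_ext_loc => k hk; apply: fg; lia. Qed.

Lemma sum_n_m_multC_l (c : C) (f : nat -> C) (n m : nat) :
  sum_n_m (fun k => (c * f k)%C) n m = (c * sum_n_m f n m)%C.
Proof. exact: (sum_n_m_mult_l (K := C_Ring)). Qed.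

Lemma sum_n_m_minusC (f g : nat -> C) (n m : nat) :
  sum_n_m (fun k => (f k - g k)%C) n m = (sum_n_m f n m - sum_n_m g n m)%C.
Proof.
rewrite (sum_n_m_ext _ (fun k => plus (f k) (mult (RtoC (-1)) (g k)))); last first.
  by move=> k; rewrite /plus /mult /=; ring.
rewrite sum_n_m_plus sum_n_m_mult_l /plus /mult /=.
by change (Ring.AbelianMonoid C_Ring) with C_AbelianMonoid; ring.
Qed.

Lemma RtoC_sum_n_m (f : nat -> R) (n m : nat) :
  RtoC (sum_n_m f n m) = sum_n_m (fun k => RtoC (f k)) n m.
Proof. by apply: (sum_n_m_morph (G := R_AbelianMonoid) (H := C_AbelianMonoid)) => // x y; rewrite /plus /= RtoC_plus. Qed.

Lemma Cmod_sum_n_m_le (f : nat -> C) (n m : nat) :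
  Cmod (sum_n_m f n m) <= sum_n_m (fun k => Cmod (f k)) n m.
Proof. exact: (norm_sum_n_m (V := C_NormedModule)). Qed.

Lemma sqnorm_nonneg (N : nat) (a : nat -> C) : 0 <= sqnorm N a.
Proof. by apply: sum_n_m_nonneg => k; apply: Rle_0_sqr. Qed.

Lemma sqnorm_le (N : nat) (a b : nat -> C) :
  (forall k, (1 <= k <= N)%nat -> Cmod (a k) <= Cmod (b k)) -> sqnorm N a <= sqnorm N b.
Proof.
move=> ab; apply: sum_n_m_le_loc => k hk; apply: Rsqr_incr_1; [|exact: Cmod_ge_0..].
by apply: ab; lia.
Qed.

Lemma sqnorm_conj (N : nat) (b : nat -> C) : sqnorm N (fun m => Cconj (b m)) = sqnorm N b.
Proof. by apply: sum_n_m_ext => k; rewrite Cmod_conj. Qed.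

Lemma sqnorm_scale (N : nat) (l : R) (a : nat -> C) :
  sqnorm N (fun n => (RtoC l * a n)%C) = l * l * sqnorm N a.
Proof.
rewrite /sqnorm -sum_n_m_scalR; apply: sum_n_m_ext => n.
by rewrite Cmod_mult Cmod_R Rsqr_mult -Rsqr_abs.
Qed.

Lemma Cmod_le_of_sqnorm_le (z : nat -> C) (K : R) (m : nat) : 0 <= K -> (0 < m)%nat ->
  sqnorm m z <= K * K -> Cmod (z m) <= K.
Proof.
move=> K0 m0 zK; apply: Rsqr_incr_0_var => //; apply: (Rle_trans _ (sqnorm m z)) => //.
case: m m0 {zK} => // m _; rewrite /sqnorm sum_n_m_1_Sr /plus /=.
by have := sqnorm_nonneg m z; rewrite /sqnorm; lra.
Qed.

Lemma sqnorm_le_support (B L : nat) (a : nat -> C) :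
  (forall m, (B < m)%nat -> a m = 0%C) -> sqnorm L a <= sqnorm B a.
Proof.
move=> a0; case: (leqP L B) => LB.
  by apply: sum_n_m_le_upper => [k|]; [exact: Rle_0_sqr|lia].
rewrite /sqnorm (sum_n_m_zero_ext _ _ _ (ltnW LB)); first exact: Rle_refl.
by move=> k hk; rewrite a0 ?Cmod_0 ?Rsqr_0 //; lia.
Qed.

Lemma sum_n_m_Rsqr_Cmod_le_sub (x y : nat -> C) (n m : nat) :
  sum_n_m (fun k => Rsqr (Cmod (x k))) n m <=
  2 * sum_n_m (fun k => Rsqr (Cmod (x k - y k))) n m + 2 * sum_n_m (fun k => Rsqr (Cmod (y k))) n m.
Proof.
rewrite -!sum_n_m_scalR -sum_n_m_plusR; apply: sum_n_m_le_loc => k _; exact: Rsqr_Cmod_le_sub.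
Qed.

Lemma Cmod_sum_mul_le (N : nat) (x y : nat -> C) :
  Cmod (sum_n_m (fun k => (x k * y k)%C) 1 N) <= sqrt (sqnorm N x) * sqrt (sqnorm N y).
Proof.
apply: Rle_trans (Cmod_sum_n_m_le _ _ _) _.
rewrite (sum_n_m_ext _ (fun k => Cmod (x k) * Cmod (y k))); last by move=> k; rewrite Cmod_mult.
rewrite -sqrt_mult; [|exact: sqnorm_nonneg..].
rewrite -[X in X <= _]sqrt_Rsqr; last by apply: sum_n_m_nonneg => k; apply: Rmult_le_pos; exact: Cmod_ge_0.
exact/sqrt_le_1_alt/sum_n_m_Cauchy_Schwarz.
Qed.

End FiniteSums.

Section HankelForms.

Definition trunc (N : nat) (a : nat -> C) : nat -> C :=
  fun n => if (n <= N)%nat then a n else 0%C.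

Lemma sqnorm_trunc (N N' : nat) (a : nat -> C) : (N <= N')%nat ->
  sqnorm N' (trunc N a) = sqnorm N a.
Proof.
move=> NN'; rewrite /sqnorm (sum_n_m_zero_ext _ _ _ NN') => [|k hk]; last first.
  by rewrite /trunc ifF ?Cmod_0 ?Rsqr_0 //; apply/negbTE; lia.
by apply: sum_n_m_ext_loc => k hk; rewrite /trunc ifT //; lia.
Qed.

Lemma Mapply_trunc (beta : nat -> C) (N N' : nat) (a : nat -> C) (m : nat) :
  (N <= N')%nat -> Mapply beta N' (trunc N a) m = Mapply beta N a m.
Proof.
move=> NN'; rewrite /Mapply (sum_n_m_zero_ext _ _ _ NN') => [|k hk]; last first.
  by rewrite /trunc ifF; [rewrite /zero /=; ring | apply/negbTE; lia].
by apply: sum_n_m_ext_loc => k hk; rewrite /trunc ifT //; lia.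
Qed.

Lemma Mform_Mapply_l (beta : nat -> C) (N : nat) (a b : nat -> C) :
  Mform beta N a b = sum_n_m (fun m => (Mapply beta N a m * Cconj (b m))%C) 1 N.
Proof.
rewrite /Mform sum_n_m_swap; apply: sum_n_m_ext_locC => m _.
rewrite /Mapply [RHS]Cmult_comm -sum_n_m_multC_l; apply: sum_n_m_ext_locC => n _; ring.
Qed.

Lemma Mform_Mapply_r (beta : nat -> C) (N : nat) (a b : nat -> C) :
  Mform beta N a b = sum_n_m (fun n => (a n * Mapply beta N (fun m => Cconj (b m)) n)%C) 1 N.
Proof.
apply: sum_n_m_ext_locC => n _; rewrite /Mapply -sum_n_m_multC_l; apply: sum_n_m_ext_locC => m _.
by rewrite mulnC; ring.
Qed.

Lemma Mform_sub (beta1 beta2 : nat -> C) (N : nat) (a b : nat -> C) :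
  Mform (fun k => (beta1 k - beta2 k)%C) N a b = (Mform beta1 N a b - Mform beta2 N a b)%C.
Proof.
rewrite /Mform -sum_n_m_minusC; apply: sum_n_m_ext_locC => n _.
by rewrite -sum_n_m_minusC; apply: sum_n_m_ext_locC => m _; ring.
Qed.

Lemma Mapply_sub (beta1 beta2 : nat -> C) (N : nat) (a : nat -> C) (m : nat) :
  Mapply (fun k => (beta1 k - beta2 k)%C) N a m = (Mapply beta1 N a m - Mapply beta2 N a m)%C.
Proof. by rewrite /Mapply -sum_n_m_minusC; apply: sum_n_m_ext_locC => n _; ring. Qed.

Lemma Mapply_scale (beta : nat -> C) (N : nat) (l : R) (a : nat -> C) (m : nat) :
  Mapply beta N (fun n => (RtoC l * a n)%C) m = (RtoC l * Mapply beta N a m)%C.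
Proof. by rewrite /Mapply -sum_n_m_multC_l; apply: sum_n_m_ext_locC => n _; ring. Qed.

Lemma Mapply_bound_of_Mform_bound (beta : nat -> C) (K : R) : 0 <= K ->
  (forall N a b, Cmod (Mform beta N a b) <= K * sqrt (sqnorm N a) * sqrt (sqnorm N b)) ->
  forall N a L, sqnorm L (Mapply beta N a) <= K * K * sqnorm N a.
Proof.
move=> K0 Hform N a L; set z := Mapply beta N a.
have NN' : (N <= maxn N L)%nat by exact: leq_maxl.
have LN' : (L <= maxn N L)%nat by exact: leq_maxr.
(* test the form against the truncation of [M(beta) a] itself *)
have Mform_z : Mform beta (maxn N L) (trunc N a) (trunc L z) = RtoC (sqnorm L z).
  rewrite Mform_Mapply_l (sum_n_m_zero_ext _ _ _ LN') => [|m hm]; last first.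
    have conj0 : Cconj 0 = 0 by apply: injective_projections => /=; lra.
    by rewrite /trunc ifF ?conj0 ?Cmult_0_r //; apply/negbTE; lia.
  rewrite RtoC_sum_n_m; apply: sum_n_m_ext_loc => m hm.
  rewrite Mapply_trunc // /trunc ifT; last by lia.
  by rewrite -Cmod2_conj Rsqr_pow2.
have := Hform (maxn N L) (trunc N a) (trunc L z).
rewrite Mform_z Cmod_R Rabs_pos_eq; last exact: sqnorm_nonneg.
rewrite !sqnorm_trunc //.
by apply: le_sqr_of_le_mul_sqrt => //; exact: sqnorm_nonneg.
Qed.

Lemma Mapply_bound_of_Mbounded (alpha : nat -> C) : Mbounded alpha ->
  exists K, 0 <= K /\ forall N a L, sqnorm L (Mapply alpha N a) <= K * K * sqnorm N a.
Proof.
move=> [K HK]; exists (Rabs K); split; first exact: Rabs_pos.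
apply: Mapply_bound_of_Mform_bound; first exact: Rabs_pos.
move=> N a b; apply: Rle_trans (HK N a b) _; rewrite !Rmult_assoc.
apply: Rmult_le_compat_r; last exact: Rle_abs.
by apply: Rmult_le_pos; exact: sqrt_pos.
Qed.

Lemma pow_Dweight_small (r c : R) : 0 <= r < 1 -> 0 < c ->
  exists B, forall m, (B < m)%nat -> r ^ Dweight m <= c.
Proof.
move=> r01 c0; have [k Hk] := pow_lt_1_zero r ltac:(rewrite Rabs_pos_eq; lra) c c0.
have [B HB] := Dweight_le_bounded k; exists B => m Bm.
have wk : (Dweight m >= k)%coq_nat.
  by case: (leqP k (Dweight m)) => wm; [lia | have := HB m ltac:(lia) (ltnW wm); lia].
by have := Hk _ wk; rewrite Rabs_pos_eq; [lra | apply: pow_le; lra].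
Qed.

Lemma Cmod_Dr_le (r : R) (a : nat -> C) (n : nat) : 0 <= r <= 1 ->
  Cmod (Dr r a n) <= Cmod (a n).
Proof.
move=> r01; have [p0 p1] := pow_unit_interval r (Dweight n) r01.
have a0 := Cmod_ge_0 (a n); rewrite /Dr Cmod_mult Cmod_R Rabs_pos_eq //; nra.
Qed.

Lemma sqnorm_Dr_le (r : R) (N : nat) (a : nat -> C) : 0 <= r <= 1 ->
  sqnorm N (Dr r a) <= sqnorm N a.
Proof. by move=> r01; apply: sqnorm_le => k _; exact: Cmod_Dr_le. Qed.

Lemma Mapply_Dr (r : R) (alpha : nat -> C) (N : nat) (a : nat -> C) (m : nat) : (0 < m)%nat ->
  Mapply (Dr r alpha) N a m = (RtoC (r ^ Dweight m) * Mapply alpha N (Dr r a) m)%C.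
Proof.
move=> m0; rewrite /Mapply -sum_n_m_multC_l; apply: sum_n_m_ext_locC => n hn.
rewrite /Dr mulnC DweightM; [|lia|lia].
by rewrite pow_add RtoC_mult mulnC; ring.
Qed.

Lemma Mform_Dr_sub (r : R) (alpha : nat -> C) (N : nat) (a b : nat -> C) :
  (Mform (Dr r alpha) N a b - Mform alpha N a b)%C =
  (sum_n_m (fun m => RtoC (r ^ Dweight m - 1) * Mapply alpha N (Dr r a) m * Cconj (b m)) 1 N +
   sum_n_m (fun n => RtoC (r ^ Dweight n - 1) * Mapply alpha N (fun m => Cconj (b m)) n * a n) 1 N)%C.
Proof.
set u := Mapply alpha N (Dr r a); set v := Mapply alpha N (fun m => Cconj (b m)).
have uv : sum_n_m (fun m => u m * Cconj (b m))%C 1 N = sum_n_m (fun n => Dr r a n * v n)%C 1 N.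
  by rewrite -Mform_Mapply_l Mform_Mapply_r.
have -> : sum_n_m (fun m => RtoC (r ^ Dweight m - 1) * u m * Cconj (b m))%C 1 N =
    (sum_n_m (fun m => Mapply (Dr r alpha) N a m * Cconj (b m)) 1 N -
     sum_n_m (fun m => u m * Cconj (b m)) 1 N)%C.
  rewrite -sum_n_m_minusC; apply: sum_n_m_ext_locC => m hm.
  by rewrite Mapply_Dr -/u ?RtoC_minus; [ring | lia].
have -> : sum_n_m (fun n => RtoC (r ^ Dweight n - 1) * v n * a n)%C 1 N =
    (sum_n_m (fun n => Dr r a n * v n) 1 N - sum_n_m (fun n => a n * v n) 1 N)%C.
  rewrite -sum_n_m_minusC; apply: sum_n_m_ext_locC => n _.
  by rewrite /Dr RtoC_minus; ring.
by rewrite Mform_Mapply_l (Mform_Mapply_r alpha) -/v uv; ring.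
Qed.

End HankelForms.

Section TotallyBoundedImages.

Definition image_totally_bounded (T : nat -> (nat -> C) -> nat -> C) : Prop :=
  forall eps : R, 0 < eps ->
    exists (K : nat) (y : nat -> nat -> C),
      forall (N : nat) (a : nat -> C), sqnorm N a <= 1 ->
        exists i : nat, (i < K)%nat /\
          forall L : nat, sqnorm L (fun m => (T N a m - y i m)%C) <= Rsqr eps.

Lemma McompactE (alpha : nat -> C) : Mcompact alpha = image_totally_bounded (Mapply alpha).
Proof. by []. Qed.

Lemma image_totally_bounded_approx (T : nat -> (nat -> C) -> nat -> C) :
  (forall eps, 0 < eps -> exists T', image_totally_bounded T' /\
     forall N a, sqnorm N a <= 1 -> forall L, sqnorm L (fun m => (T N a m - T' N a m)%C) <= Rsqr eps) ->
  image_totally_bounded T.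
Proof.
move=> approx eps eps0.
have [T' [T'tb T'close]] := approx (eps / 2) ltac:(lra).
have [K [y Hy]] := T'tb (eps / 2) ltac:(lra).
exists K, y => N a a1; have [i [iK Hi]] := Hy N a a1; exists i; split => // L.
have := sum_n_m_Rsqr_Cmod_le_sub (fun m => T N a m - y i m)%C (fun m => T' N a m - y i m)%C 1 L.
have -> : sum_n_m (fun m => Rsqr (Cmod ((T N a m - y i m) - (T' N a m - y i m))%C)) 1 L =
          sqnorm L (fun m => T N a m - T' N a m)%C.
  by apply: sum_n_m_ext => m; congr (Rsqr (Cmod _)); ring.
have := T'close N a a1 L; have := Hi L; rewrite /sqnorm /Rsqr; lra.
Qed.

Lemma mixed_radix (G1 G2 i j : nat) : (i < G1)%nat -> (j < G2)%nat ->
  [/\ (i * G2 + j < G1 * G2)%nat, ((i * G2 + j) %/ G2)%nat = i & ((i * G2 + j) %% G2)%nat = j].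
Proof.
move=> iG1 jG2; split; first by nia.
- by rewrite divnMDl ?divn_small ?addn0 //; lia.
- by rewrite modnMDl modn_small.
Qed.

Lemma real_grid (h x : R) (n : nat) : 0 < h -> 0 <= x < INR n * h ->
  exists j, (j < n)%nat /\ Rabs (x - INR j * h) <= h.
Proof.
move=> h0; elim: n => [|n IH] [x0 xn]; first by rewrite /= Rmult_0_l in xn; lra.
have [xlt|xge] := Rlt_le_dec x (INR n * h).
  by have [j [jn Hj]] := IH (conj x0 xlt); exists j; split => //; lia.
by exists n; split => //; rewrite S_INR in xn; rewrite Rabs_pos_eq; lra.
Qed.

Lemma disc_net (K eta : R) : 0 < eta -> exists (G : nat) (c : nat -> C),
  forall w : C, Cmod w <= K -> exists j, (j < G)%nat /\ Cmod (w - c j) <= eta.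
Proof.
move=> eta0; set h := eta / 2.
have [n nh] : exists n, 2 * K < INR n * h.
  have [n0 Hn0] := INR_archimed h (2 * K) ltac:(rewrite /h; lra).
  by exists n0.+1; rewrite S_INR; rewrite /h in Hn0 *; lra.
exists (n * n)%nat, (fun j => (- K + INR (j %/ n) * h, - K + INR (j %% n) * h)) => w wK.
have [re_lo re_hi] : - K <= fst w <= K.
  by apply/Rabs_le_between; apply: Rle_trans (re_le_Cmod w) wK.
have [im_lo im_hi] : - K <= snd w <= K.
  apply/Rabs_le_between; apply: Rle_trans wK.
  by apply: Rle_trans (Rmax_r _ _) (Rmax_Cmod w).
have [j1 [j1n H1]] := real_grid h (fst w + K) n ltac:(rewrite /h; lra) ltac:(lra).
have [j2 [j2n H2]] := real_grid h (snd w + K) n ltac:(rewrite /h; lra) ltac:(lra).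
have [jn E1 E2] := mixed_radix n n j1 j2 j1n j2n.
exists (j1 * n + j2)%nat; split => //.
apply: Rle_trans (Cmod_2Rmax _) _; rewrite /= E1 E2.
have sqrt2 : sqrt 2 < 2.
  have s0 := sqrt_pos 2; have s2 := sqrt_sqrt 2 ltac:(lra); nra.
have M0 : 0 <= Rmax (Rabs (fst w - (- K + INR j1 * h))) (Rabs (snd w - (- K + INR j2 * h))).
  exact: Rle_trans (Rabs_pos _) (Rmax_l _ _).
have Mh : Rmax (Rabs (fst w - (- K + INR j1 * h))) (Rabs (snd w - (- K + INR j2 * h))) <= h.
  apply: Rmax_lub.
  - by rewrite (_ : fst w - _ = fst w + K - INR j1 * h) //; ring.
  - by rewrite (_ : snd w - _ = snd w + K - INR j2 * h) //; ring.
move: M0 Mh; set M := Rmax _ _ => M0 Mh.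
have : sqrt 2 * M <= 2 * M by apply: Rmult_le_compat_r; lra.
rewrite /h in Mh; lra.
Qed.

Lemma box_net (B : nat) (K eta : R) : 0 < eta -> exists (G : nat) (y : nat -> nat -> C),
  forall z : nat -> C, (forall m, (0 < m <= B)%nat -> Cmod (z m) <= K) ->
    exists i, (i < G)%nat /\ forall m, (0 < m <= B)%nat -> Cmod (z m - y i m) <= eta.
Proof.
move=> eta0; elim: B => [|B [G [y Hy]]].
  by exists 1%nat, (fun _ _ => 0%C) => z _; exists 0%nat; split => // m; lia.
have [G1 [c Hc]] := disc_net K eta eta0.
exists (G * G1)%nat, (fun i m => if m == B.+1 then c (i %% G1)%nat else y (i %/ G1)%nat m).
move=> z zK; have [i [iG Hi]] := Hy z (fun m hm => zK m ltac:(lia)).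
have [j [jG1 Hj]] := Hc (z B.+1) (zK B.+1 ltac:(lia)).
have [ijG E1 E2] := mixed_radix G G1 i j iG jG1.
exists (i * G1 + j)%nat; split => // m hm; rewrite E1 E2.
by case: eqP => [->|mB] //; apply: Hi; lia.
Qed.

Lemma image_totally_bounded_finite_support (T : nat -> (nat -> C) -> nat -> C) (B : nat) (K : R) :
  (forall N a m, sqnorm N a <= 1 -> (0 < m)%nat -> Cmod (T N a m) <= K) ->
  (forall N a m, (B < m)%nat -> T N a m = 0%C) ->
  image_totally_bounded T.
Proof.
move=> TK Tsupp eps eps0; have B0 := pos_INR B; set eta := eps / (INR B + 1).
have eta0 : 0 < eta by apply: Rdiv_lt_0_compat; lra.
have [G [y Hy]] := box_net B K eta eta0.
exists G, (fun i => trunc B (y i)) => N a a1.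
have [i [iG Hi]] := Hy (T N a) (fun m hm => TK N a m a1 ltac:(lia)).
exists i; split => // L.
apply: Rle_trans (sqnorm_le_support B L _ _) _.
  by move=> m mB; rewrite Tsupp // /trunc ifF; [ring | apply/negbTE; lia].
apply: Rle_trans (_ : _ <= sum_n_m (fun _ => Rsqr eta) 1 B) _.
  apply: sum_n_m_le_loc => m hm; rewrite /trunc ifT; last by lia.
  by apply: Rsqr_incr_1; [apply: Hi; lia | exact: Cmod_ge_0 | lra].
rewrite sum_n_m_const (_ : (B.+1 - 1)%coq_nat = B); last by lia.
rewrite /eta /Rsqr (_ : INR B * (eps / (INR B + 1) * (eps / (INR B + 1))) =
  eps * eps * (INR B / ((INR B + 1) * (INR B + 1)))); last by field; lra.
have : INR B / ((INR B + 1) * (INR B + 1)) <= 1 by apply/Rle_div_l; nra.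
have := Rle_0_sqr eps; rewrite /Rsqr; nra.
Qed.

Lemma eventually_forall_lt (P : nat -> Prop) (Q : nat -> nat -> Prop) (K : nat) :
  (forall i, P i -> exists L0, forall L, (L0 <= L)%nat -> Q i L) ->
  exists L0, forall L, (L0 <= L)%nat -> forall i, (i < K)%nat -> P i -> Q i L.
Proof.
move=> ev; elim: K => [|K [L0 HL0]]; first by exists 0%nat => L _ i; rewrite ltn0.
have [PK|nPK] := classic (P K).
  have [L1 HL1] := ev K PK; exists (maxn L0 L1) => L hL i iK Pi.
  by case: (ltngtP i K) => [iK'|Ki|->]; [apply: HL0 => //; lia | lia | apply: HL1; lia].
exists L0 => L hL i iK Pi.
by case: (ltngtP i K) => [iK'|Ki|iK']; [exact: HL0 | lia | rewrite iK' in Pi].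
Qed.

Lemma image_totally_bounded_tail (T : nat -> (nat -> C) -> nat -> C) (M : R) :
  (forall N a L, sqnorm N a <= 1 -> sqnorm L (T N a) <= M) -> image_totally_bounded T ->
  forall eps, 0 < eps -> exists L0, forall N a, sqnorm N a <= 1 ->
    forall L, sum_n_m (fun m => Rsqr (Cmod (T N a m))) L0.+1 L <= Rsqr eps.
Proof.
move=> TM Ttb eps eps0; set e := eps / 3.
have [K [y Hy]] := Ttb e ltac:(rewrite /e; lra).
pose near_image i := exists N0 a0, sqnorm N0 a0 <= 1 /\
  forall L, sqnorm L (fun m => T N0 a0 m - y i m)%C <= Rsqr e.
(* only the centres [y i] near the image need to be square summable *)
have tails i : near_image i -> exists L1, forall L2, (L1 <= L2)%nat ->
    forall L, sum_n_m (fun m => Rsqr (Cmod (y i m))) L2.+1 L <= Rsqr e.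
  move=> [N0 [a0 [a01 close]]].
  have y_bounded L : sum_n_m (fun m => Rsqr (Cmod (y i m))) 1 L <= 2 * Rsqr e + 2 * M.
    have := sum_n_m_Rsqr_Cmod_le_sub (y i) (T N0 a0) 1 L.
    have -> : sum_n_m (fun m => Rsqr (Cmod (y i m - T N0 a0 m))) 1 L =
              sqnorm L (fun m => T N0 a0 m - y i m)%C.
      by apply: sum_n_m_ext => m; rewrite -Cmod_opp; congr (Rsqr (Cmod _)); ring.
    by have := close L; have := TM N0 a0 L a01; rewrite /sqnorm; lra.
  have [L1 HL1] := sum_n_m_tail_small _ _ (fun m => Rle_0_sqr _) y_bounded (Rsqr e)
    ltac:(apply: Rlt_0_sqr; rewrite /e; lra).
  by exists L1 => L2 L12 L; apply: HL1.
have [L0 HL0] := eventually_forall_lt _ _ K tails.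
exists L0 => N a a1 L; have [i [iK Hi]] := Hy N a a1.
have := HL0 L0 (leqnn _) i iK (ex_intro _ N (ex_intro _ a (conj a1 Hi))) L.
have := sum_n_m_Rsqr_Cmod_le_sub (T N a) (y i) L0.+1 L.
have := sum_n_m_tail_le (fun m => Rsqr (Cmod (T N a m - y i m))) L0 L (fun m => Rle_0_sqr _).
have := Hi L; have := Rle_0_sqr eps; rewrite /sqnorm /e /Rsqr; lra.
Qed.

End TotallyBoundedImages.

Section DilationApproximation.

Lemma image_totally_bounded_Dr (alpha : nat -> C) (r : R) : Mbounded alpha -> 0 <= r < 1 ->
  image_totally_bounded (Mapply (Dr r alpha)).
Proof.
move=> Hb r01; have [K [K0 HK]] := Mapply_bound_of_Mbounded alpha Hb.
have u_bound N a L : sqnorm N a <= 1 -> sqnorm L (Mapply alpha N (Dr r a)) <= K * K.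
  move=> a1; apply: Rle_trans (HK _ _ _) _.
  by have := sqnorm_Dr_le r N a ltac:(lra); have := sqnorm_nonneg N (Dr r a); nra.
have Mapply_Dr_le N a m : (0 < m)%nat ->
    Cmod (Mapply (Dr r alpha) N a m) <= r ^ Dweight m * Cmod (Mapply alpha N (Dr r a) m).
  move=> m0; rewrite Mapply_Dr // Cmod_mult Cmod_R Rabs_pos_eq; first exact: Rle_refl.
  by apply: pow_le; lra.
apply: image_totally_bounded_approx => eps eps0.
set c := eps / (K + 1); have c0 : 0 < c by apply: Rdiv_lt_0_compat; lra.
have [B HB] := pow_Dweight_small r c r01 c0.
exists (fun N a => trunc B (Mapply (Dr r alpha) N a)); split.
  apply: (image_totally_bounded_finite_support _ B K) => [N a m a1 m0|N a m Bm]; last first.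
    by rewrite /trunc ifF //; apply/negbTE; lia.
  rewrite /trunc; case: ifP => _; last by rewrite Cmod_0.
  apply: Rle_trans (Mapply_Dr_le N a m m0) _.
  have [p0 p1] := pow_unit_interval r (Dweight m) ltac:(lra).
  have := Cmod_le_of_sqnorm_le _ K m K0 m0 (u_bound N a m a1).
  by have := Cmod_ge_0 (Mapply alpha N (Dr r a) m); nra.
move=> N a a1 L.
apply: Rle_trans (_ : _ <= sqnorm L (fun m => RtoC c * Mapply alpha N (Dr r a) m)%C) _.
  apply: sqnorm_le => m hm; rewrite /trunc; case: ifP => mB.
    by rewrite (_ : (_ - _)%C = 0) ?Cmod_0; [exact: Cmod_ge_0 | ring].
  rewrite Cmod_mult Cmod_R Rabs_pos_eq; last by lra.
  rewrite (_ : (_ - 0)%C = Mapply (Dr r alpha) N a m); last by ring.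
  apply: Rle_trans (Mapply_Dr_le N a m ltac:(lia)) _.
  by apply: Rmult_le_compat_r; [exact: Cmod_ge_0 | apply: HB; lia].
have cK : c * K <= eps.
  have -> : c * K = eps - c by rewrite /c; field; lra.
  lra.
have cK2 : (c * K) * (c * K) <= eps * eps.
  by apply: Rmult_le_compat => //; apply: Rmult_le_pos; lra.
rewrite sqnorm_scale; apply: Rle_trans (Rmult_le_compat_l _ _ _ _ (u_bound N a L a1)) _.
  exact: Rle_0_sqr.
by rewrite /Rsqr; lra.
Qed.

Lemma Mcompact_of_Dr_approx (alpha : nat -> C) : Mbounded alpha ->
  (forall eps, 0 < eps -> exists delta, 0 < delta /\
     forall r, 0 < r -> 1 - delta < r -> r < 1 -> Mdiff_norm_le (Dr r alpha) alpha eps) ->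
  Mcompact alpha.
Proof.
move=> Hb Happrox; rewrite McompactE; apply: image_totally_bounded_approx => eps eps0.
have [delta [delta0 Hdelta]] := Happrox eps eps0.
set r := Rmax (1 / 2) (1 - delta / 2).
have r_lo : 1 / 2 <= r /\ 1 - delta / 2 <= r by split; [apply: Rmax_l | apply: Rmax_r].
have r_hi : r < 1 by apply: Rmax_lub_lt; lra.
exists (Mapply (Dr r alpha)); split; first by apply: image_totally_bounded_Dr => //; lra.
move=> N a a1 L.
have Hform N' a' b' : Cmod (Mform (fun k => alpha k - Dr r alpha k)%C N' a' b') <=
                      eps * sqrt (sqnorm N' a') * sqrt (sqnorm N' b').
  rewrite Mform_sub -Cmod_opp (_ : (- _)%C = (Mform (Dr r alpha) N' a' b' - Mform alpha N' a' b')%C).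
    by apply: Hdelta; lra.
  by ring.
have := Mapply_bound_of_Mform_bound _ eps ltac:(lra) Hform N a L.
have -> : sqnorm L (Mapply (fun k => alpha k - Dr r alpha k)%C N a) =
          sqnorm L (fun m => Mapply alpha N a m - Mapply (Dr r alpha) N a m)%C.
  by apply: sum_n_m_ext => m; rewrite Mapply_sub.
have := sqnorm_nonneg N a; have := Rle_0_sqr eps; rewrite /Rsqr; nra.
Qed.

End DilationApproximation.

Section DilationConvergence.

Lemma sqnorm_mul_le_tail (phi : nat -> R) (z : nat -> C) (eta : R) (L0 L : nat) :
  (forall m, Rabs (phi m) <= 1) -> (forall m, (m <= L0)%nat -> Rabs (phi m) <= eta) ->
  sqnorm L (fun m => RtoC (phi m) * z m)%C <=
  eta * eta * sqnorm L z + sum_n_m (fun m => Rsqr (Cmod (z m))) L0.+1 L.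
Proof.
move=> phi1 phi_eta; have eta0 := Rle_trans _ _ _ (Rabs_pos _) (phi_eta 0%nat (leq0n _)).
have head L' : (L' <= L0)%nat ->
    sqnorm L' (fun m => RtoC (phi m) * z m)%C <= eta * eta * sqnorm L' z.
  move=> L'L0; rewrite /sqnorm -sum_n_m_scalR; apply: sum_n_m_le_loc => m hm.
  rewrite Cmod_mult Cmod_R Rsqr_mult; apply: Rmult_le_compat_r; first exact: Rle_0_sqr.
  by apply: Rsqr_incr_1; [apply: phi_eta; lia | exact: Rabs_pos | exact: eta0].
have tail0 := sum_n_m_nonneg (fun m => Rsqr (Cmod (z m))) L0.+1 L (fun m => Rle_0_sqr _).
case: (leqP L L0) => LL0; first by have := head L LL0; lra.
have L0L : (L0 <= L)%nat by lia.
have tail_le : sum_n_m (fun m => Rsqr (Cmod (RtoC (phi m) * z m))) L0.+1 L <=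
               sum_n_m (fun m => Rsqr (Cmod (z m))) L0.+1 L.
  apply: sum_n_m_le_loc => m _; rewrite Cmod_mult Cmod_R Rsqr_mult.
  rewrite -{2}(Rmult_1_l (Rsqr (Cmod (z m)))); apply: Rmult_le_compat_r; first exact: Rle_0_sqr.
  by rewrite -Rsqr_1; apply: Rsqr_incr_1; [exact: phi1 | exact: Rabs_pos | lra].
rewrite /sqnorm !(sum_n_m_split1 _ _ _ L0L) /plus /=.
by have := head L0 (leqnn _); have := sqnorm_nonneg L0 z; rewrite /sqnorm; nra.
Qed.

Lemma Dweight_multiplier_small (T : nat -> (nat -> C) -> nat -> C) (K : R) : 0 <= K ->
  (forall N a L, sqnorm N a <= 1 -> sqnorm L (T N a) <= K * K) -> image_totally_bounded T ->
  forall eps, 0 < eps -> exists delta, 0 < delta /\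
    forall r, 0 <= r -> 1 - delta < r -> r <= 1 -> forall N a, sqnorm N a <= 1 ->
      forall L, sqnorm L (fun m => RtoC (r ^ Dweight m - 1) * T N a m)%C <= Rsqr eps.
Proof.
move=> K0 TK Ttb eps eps0.
have [L0 HL0] := image_totally_bounded_tail T (K * K) TK Ttb (eps / 2) ltac:(lra).
set k := \max_(m < L0.+1) Dweight m.
have Hk m : (m <= L0)%nat -> (Dweight m <= k)%nat.
  by rewrite -ltnS => mL0; exact: (leq_bigmax (Ordinal mL0)).
have k0 := pos_INR k; set eta := eps / (2 * (K + 1)).
have eta0 : 0 < eta by apply: Rdiv_lt_0_compat; lra.
exists (eta / (INR k + 1)); split; first by apply: Rdiv_lt_0_compat; lra.
move=> r r0 r_lo r1 N a a1 L.
apply: Rle_trans (sqnorm_mul_le_tail _ _ eta L0 L _ _) _.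
- move=> m; have [p0 p1] := pow_unit_interval r (Dweight m) ltac:(lra).
  by rewrite Rabs_left1; lra.
- move=> m mL0; have [p0 p1] := pow_unit_interval r (Dweight m) ltac:(lra).
  rewrite Rabs_left1; last by lra.
  have := one_sub_pow_le r (Dweight m) ltac:(lra).
  have : INR (Dweight m) <= INR k by apply/le_INR/leP/Hk.
  have : (INR k + 1) * (eta / (INR k + 1)) = eta by field; lra.
  nra.
have etaK : eta * K <= eps / 2.
  have -> : eta * K = eps / 2 - eps / (2 * (K + 1)) by rewrite /eta; field; lra.
  have : 0 < eps / (2 * (K + 1)) by apply: Rdiv_lt_0_compat; lra.
  lra.
have head : eta * eta * sqnorm L (T N a) <= (eps / 2) * (eps / 2).
  apply: Rle_trans (_ : _ <= (eta * K) * (eta * K)) _.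
    by rewrite (_ : (eta * K) * (eta * K) = eta * eta * (K * K)); [apply: Rmult_le_compat_l; [nra | exact: TK] | ring].
  by apply: Rmult_le_compat => //; nra.
by have := HL0 N a a1 L; have := Rle_0_sqr eps; rewrite /Rsqr; lra.
Qed.

Lemma le_sqnorm_of_unit_ball (F : (nat -> C) -> R) (N : nat) (e : R) : 0 <= e ->
  (forall (l : R) a, F (fun n => RtoC l * a n)%C = l * l * F a) ->
  (forall a, sqnorm N a <= 1 -> F a <= e) ->
  forall a, F a <= e * sqnorm N a.
Proof.
move=> e0 F_hom F_ball a; have s0 := sqnorm_nonneg N a.
apply: le_epsilon => t t0; have t' : 0 < t / (e + 1) by apply: Rdiv_lt_0_compat; lra.
set u := sqnorm N a + t / (e + 1); have u0 : 0 < u by rewrite /u; lra.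
(* rescale [a] into the unit ball by [1 / sqrt u] *)
have := F_ball (fun n => RtoC (/ sqrt u) * a n)%C.
rewrite F_hom sqnorm_scale -Rinv_mult sqrt_sqrt; last by lra.
move=> Fb; have {Fb}Fa : / u * F a <= e.
  by apply: Fb; rewrite Rmult_comm; apply/Rle_div_l; rewrite /u; lra.
have : F a <= e * u.
  have := Rmult_le_compat_l u _ _ (Rlt_le _ _ u0) Fa.
  by rewrite -Rmult_assoc Rinv_r ?Rmult_1_l; lra.
have : e * (t / (e + 1)) = t - t / (e + 1) by field; lra.
rewrite /u; lra.
Qed.

Lemma Dweight_multiplier_Mapply_le (alpha : nat -> C) : Mbounded alpha -> Mcompact alpha ->
  forall eps, 0 < eps -> exists delta, 0 < delta /\
    forall r, 0 <= r -> 1 - delta < r -> r <= 1 -> forall N c,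
      sqnorm N (fun m => RtoC (r ^ Dweight m - 1) * Mapply alpha N c m)%C <= Rsqr eps * sqnorm N c.
Proof.
move=> Hb Hc eps eps0; have [K [K0 HK]] := Mapply_bound_of_Mbounded alpha Hb.
have HK1 N a L : sqnorm N a <= 1 -> sqnorm L (Mapply alpha N a) <= K * K.
  by move=> a1; apply: Rle_trans (HK N a L) _; have := sqnorm_nonneg N a; nra.
have [delta [delta0 Hdelta]] := Dweight_multiplier_small _ K K0 HK1 Hc eps eps0.
exists delta; split => // r r0 r_lo r1 N.
apply: (le_sqnorm_of_unit_ball (fun c => sqnorm N (fun m => RtoC (r ^ Dweight m - 1) * Mapply alpha N c m)%C))
  => [|l c|c c1]; first exact: Rle_0_sqr.
- rewrite -sqnorm_scale; apply: sum_n_m_ext => m; rewrite Mapply_scale.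
  by congr (Rsqr (Cmod _)); ring.
- exact: Hdelta.
Qed.

Lemma Dr_approx_of_Mcompact (alpha : nat -> C) : Mbounded alpha -> Mcompact alpha ->
  forall eps, 0 < eps -> exists delta, 0 < delta /\
    forall r, 0 < r -> 1 - delta < r -> r < 1 -> Mdiff_norm_le (Dr r alpha) alpha eps.
Proof.
move=> Hb Hc eps eps0.
have [delta [delta0 Hdelta]] := Dweight_multiplier_Mapply_le alpha Hb Hc (eps / 2) ltac:(lra).
exists delta; split => // r r0 r_lo r1 N a b.
have mult_le c := Hdelta r ltac:(lra) r_lo ltac:(lra) N c.
rewrite Mform_Dr_sub; apply: Rle_trans (Cmod_triangle _ _) _.
have term1 := Cmod_sum_mul_le N
  (fun m => RtoC (r ^ Dweight m - 1) * Mapply alpha N (Dr r a) m)%C (fun m => Cconj (b m)).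
have term2 := Cmod_sum_mul_le N
  (fun n => RtoC (r ^ Dweight n - 1) * Mapply alpha N (fun m => Cconj (b m)) n)%C a.
rewrite sqnorm_conj in term1.
have bound1 : sqrt (sqnorm N (fun m => RtoC (r ^ Dweight m - 1) * Mapply alpha N (Dr r a) m)%C)
              <= eps / 2 * sqrt (sqnorm N a).
  apply: sqrt_le_mul_sqrt; [lra | exact: sqnorm_nonneg |].
  apply: Rle_trans (mult_le _) _.
  by apply: Rmult_le_compat_l; [exact: Rle_0_sqr | apply: sqnorm_Dr_le; lra].
have bound2 : sqrt (sqnorm N (fun n => RtoC (r ^ Dweight n - 1) * Mapply alpha N (fun m => Cconj (b m)) n)%C)
              <= eps / 2 * sqrt (sqnorm N b).
  by rewrite -(sqnorm_conj N b); apply: sqrt_le_mul_sqrt; [lra | exact: sqnorm_nonneg | exact: mult_le].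
have := sqrt_pos (sqnorm N a); have := sqrt_pos (sqnorm N b).
nra.
Qed.

End DilationConvergence.

Theorem proposition5 (alpha : nat -> C) :
  Mbounded alpha ->
  (Mcompact alpha <->
   (forall eps : R, (0 < eps)%R ->
      exists delta : R, (0 < delta)%R /\
        forall r : R, (0 < r)%R -> (1 - delta < r)%R -> (r < 1)%R ->
          Mdiff_norm_le (Dr r alpha) alpha eps)).
Proof.
move=> Hb; split; first exact: Dr_approx_of_Mcompact.
exact: Mcompact_of_Dr_approx.
Qed.
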